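(* Let $n,d\ge 0$ be integers and let $G\subseteq\mathbb{N}$ be infinite (so $G\approx\omega$). Then there exists $H\subseteq\omega^d$ with $H\approx\omega^d$ such that every $e\in\binom{H}{n}$ satisfies some coloring rule on $\binom{\omega^d}{n}$, and every coefficient of every element of $e$ lies in $G$.
   Context: Ordinals are identified with the sets of smaller ordinals; $\approx$ is order-equivalence; $\binom{S}{n}$ is the set of $n$-element subsets of $S$. Every $\beta<\omega^d\cdot k$ ($d,k\ge0$) is uniquely written $\beta=\omega^d\cdot b+\omega^{d-1}a_{d-1}+\cdots+\omega a_1+a_0$ with $0\le b<k$, $a_j\in\mathbb{N}$; the numbers $a_0,\dots,a_{d-1}$ are called the coefficients of $\beta$; here $\omega^d=\omega^d\cdot1$. A coloring rule (CR) on $\binom{\omega^d\cdot k}{n}$ is a pair $(\mathcal{Y},\preceq)$ with $\mathcal{Y}:\{1,\dots,n\}\to\{0,\dots,k-1\}$ and $\preceq$ a total preorder on $I=\{(i,j):1\le i\le n,0\le j<d\}$ (write $\equiv$ for the induced equivalence and $\prec$ for the strict part) such that: (1) if $d\ge1$, $(i,0)\prec(i',0)$ for $i<i'$; if $d=0$, $\mathcal{Y}(i)<\mathcal{Y}(i')$ for $i<i'$; (2) $(i,j)\equiv(i',j)$ for some $j$ implies $\mathcal{Y}(i)=\mathcal{Y}(i')$; (3) $(i,j)\prec(i,j')$ for $j>j'$; (4) $(i,j)\equiv(i',j')$ implies $j=j'$; (5) for $j>0$, $(i,j)\not\equiv(i',j)$ implies $(i,j-1)\not\equiv(i',j-1)$.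 An edge $e\in\binom{\omega^d\cdot k}{n}$ satisfies the CR $(\mathcal{Y},\preceq)$ if its elements can be enumerated as $p_i=\omega^d b_i+\sum_{j<d}\omega^j a_{i,j}$ ($1\le i\le n$) so that $b_i=\mathcal{Y}(i)$ for all $i$ and $(i,j)\preceq(i',j')\iff a_{i,j}\le a_{i',j'}$ for all $(i,j),(i',j')\in I$. *)

From mathcomp Require Import all_boot.
Set Implicit Arguments. Unset Strict Implicit. Unset Printing Implicit Defensive.

(* An ordinal beta < omega^d * k, written
   beta = omega^d * b + omega^(d-1) a_(d-1) + ... + a_0,
   is represented by the pair (b, a) with b : 'I_k and a j = a_j (j < d).
   This is a bijective representation (Cantor normal form). *)
Definition ordlt (d k : nat) := ('I_k * {ffun 'I_d -> nat})%type.

Definition olt (d k : nat) (x y : ordlt d k) : Prop :=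
  (x.1 < y.1)%N \/
  (x.1 = y.1 /\ exists j : 'I_d, (x.2 j < y.2 j)%N /\
                 forall j' : 'I_d, (j < j')%N -> x.2 j' = y.2 j').

Definition order_equiv_full (d k : nat) (H : ordlt d k -> Prop) : Prop :=
  exists f : ordlt d k -> ordlt d k,
    (forall x, H (f x)) /\ (forall y, H y -> exists x, f x = y) /\
    (forall x y, olt x y <-> olt (f x) (f y)).

Definition is_nsubset (d k n : nat) (H : ordlt d k -> Prop) (e : seq (ordlt d k)) :=
  [/\ uniq e, size e = n & forall x, x \in e -> H x].

(* Coloring rule (Y, le) on [omega^d * k]^n; indices i in 1..n are shifted to
   'I_n (0..n-1); I = 'I_n * 'I_d; le is the preorder on I. *)
Definition is_CR (n d k : nat) (Y : 'I_n -> 'I_k)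
    (le : 'I_n * 'I_d -> 'I_n * 'I_d -> bool) : Prop :=
  let eqv u v := le u v && le v u in
  let lt u v := le u v && ~~ le v u in
  (forall u v, le u v || le v u) /\
  (forall u v w, le u v -> le v w -> le u w) /\
  ((0 < d)%N -> forall (j : 'I_d) (i i' : 'I_n), val j = 0 -> (i < i')%N ->
      lt (i, j) (i', j)) /\
  (d = 0 -> forall i i' : 'I_n, (i < i')%N -> (Y i < Y i')%N) /\
  (forall (i i' : 'I_n) (j : 'I_d), eqv (i, j) (i', j) -> Y i = Y i') /\
  (forall (i : 'I_n) (j j' : 'I_d), (j' < j)%N -> lt (i, j) (i, j')) /\
  (forall (i i' : 'I_n) (j j' : 'I_d), eqv (i, j) (i', j') -> j = j') /\
  (forall (i i' : 'I_n) (j j1 : 'I_d), val j = (val j1).+1 ->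
      ~~ eqv (i, j) (i', j) -> ~~ eqv (i, j1) (i', j1)).

Definition satisfies_CR (n d k : nat) (e : seq (ordlt d k)) (Y : 'I_n -> 'I_k)
    (le : 'I_n * 'I_d -> 'I_n * 'I_d -> bool) : Prop :=
  exists p : 'I_n -> ordlt d k,
    perm_eq e [seq p i | i <- enum 'I_n] /\
    (forall i, (p i).1 = Y i) /\
    (forall (u v : 'I_n * 'I_d), le u v = ((p u.1).2 u.2 <= (p v.1).2 v.2)%N).

Definition infinite_nat_set (G : nat -> Prop) : Prop :=
  forall m, exists g, (m <= g)%N /\ G g.

From mathcomp Require Import all_boot zify.
From Stdlib Require Import ClassicalEpsilon.
Set Implicit Arguments. Unset Strict Implicit. Unset Printing Implicit Defensive.

(* Enumerate G increasingly by g and send a point with coefficients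
   (a_0, ..., a_(d-1)) to the point whose j-th coefficient is g applied to an
   injective code of the list (a_j, ..., a_(d-1)).  With the code
   [x :: s] = 2^[s] (2x + 1), the coefficients of the image lie in G, the map
   preserves the ordinal order, and on its image a coefficient with a larger
   index codes a shorter list, hence is smaller (rule (3)); equal coefficients
   code equal lists, hence have equal index (rule (4)) and equal tails
   (rule (5)); and the coefficient at index 0 codes the whole point, so
   sorting an edge by it gives rule (1).  The preorder of the rule is then
   simply the comparison of coefficients. *)

Fixpoint code (s : seq nat) : nat :=
  if s is x :: s' then 2 ^ code s' * (2 * x + 1) else 0.

Lemma pow2_odd_inj a a' x x' :
  2 ^ a * (2 * x + 1) = 2 ^ a' * (2 * x' + 1) -> a = a' /\ x = x'.
Proof.
elim: a a' => [|a IHa] [|a'] /=; rewrite ?expn0 ?mul1n ?expnS -?mulnA.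
- by move=> E; split; lia.
- by set t := _ * _; lia.
- by set t := _ * _; lia.
- by move=> E; have [-> ->] : a = a' /\ x = x' by apply: IHa; lia.
Qed.

Lemma code_inj : injective code.
Proof.
elim=> [|x s IHs] [|y t] //=.
- by move=> E; have := muln_gt0 (2 ^ code t) (2 * y + 1); rewrite -E expn_gt0 addn1.
- by move=> E; have := muln_gt0 (2 ^ code s) (2 * x + 1); rewrite E expn_gt0 addn1.
- by case/pow2_odd_inj => /IHs -> ->.
Qed.

Lemma ltn_code_cons x s : code s < code (x :: s).
Proof.
by rewrite /= (leq_trans (ltn_expl _ (ltnSn 1))) // leq_pmulr // addn1.
Qed.

Lemma ltn_code_head x y s : x < y -> code (x :: s) < code (y :: s).
Proof. by move=> lt_xy; rewrite /= ltn_pmul2l ?expn_gt0 //; lia. Qed.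

Lemma leq_code_drop k s : code (drop k s) <= code s.
Proof.
elim: s k => [|x s IHs] [|k] //=.
exact: leq_trans (IHs k) (ltnW (ltn_code_cons x s)).
Qed.

Lemma codom_nth d (a : {ffun 'I_d -> nat}) (j : 'I_d) : nth 0 (codom a) j = a j.
Proof. by rewrite codomE (nth_map j) ?size_enum_ord // nth_ord_enum. Qed.

Section Coefficients.
Variable d : nat.
Implicit Types (a b : {ffun 'I_d -> nat}).

Definition coef_suffix a (j : nat) : seq nat := drop j (codom a).

Lemma size_coef_suffix a j : size (coef_suffix a j) = d - j.
Proof. by rewrite size_drop size_codom card_ord. Qed.

Lemma coef_suffix_cons a (j : 'I_d) :
  coef_suffix a j = a j :: coef_suffix a j.+1.
Proof. by rewrite /coef_suffix (drop_nth 0) ?codom_nth // size_codom card_ord. Qed.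

Lemma coef_suffix_behead a j : coef_suffix a j.+1 = behead (coef_suffix a j).
Proof. by rewrite /coef_suffix -drop1 drop_drop. Qed.

Lemma eq_coef_suffix a b j :
  (forall j' : 'I_d, j <= j' -> a j' = b j') -> coef_suffix a j = coef_suffix b j.
Proof.
move=> eq_ab; apply: (@eq_from_nth _ 0) => [|i]; rewrite !size_coef_suffix //.
move=> lt_i; rewrite !nth_drop.
have lt_ji : j + i < d by lia.
by rewrite -[j + i]/(val (Ordinal lt_ji)) !codom_nth eq_ab //= leq_addr.
Qed.

Lemma coef_suffix_eq_ord a b (j j' : 'I_d) :
  coef_suffix a j = coef_suffix b j' -> j = j'.
Proof.
move/(congr1 size); rewrite !size_coef_suffix => E; apply: ord_inj.
by have := ltn_ord j; have := ltn_ord j'; lia.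
Qed.

Definition colex_lt a b : Prop :=
  exists j : 'I_d, a j < b j /\ forall j' : 'I_d, j < j' -> a j' = b j'.

Lemma colex_asym a b : colex_lt a b -> ~ colex_lt b a.
Proof.
case=> j [lt_ab eq_ab] [j' [lt_ba eq_ba]].
case: (ltngtP j j') => [lt_jj'|lt_j'j|/val_inj eq_jj'].
- by move: lt_ba; rewrite eq_ab ?ltnn.
- by move: lt_ab; rewrite eq_ba ?ltnn.
- by move: lt_ab; rewrite eq_jj' ltnNge ltnW.
Qed.

Lemma colex_irr a : ~ colex_lt a a.
Proof. by move=> lt_aa; exact: (colex_asym lt_aa lt_aa). Qed.

Lemma colex_total a b : a <> b -> colex_lt a b \/ colex_lt b a.
Proof.
move=> neq_ab.
have [j0 neq_j0] : exists j0, a j0 != b j0.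
  apply/existsP; apply: contraT; rewrite negb_exists => /forallP eq_ab.
  by case: neq_ab; apply/ffunP => j; apply/eqP/negPn/eq_ab.
case: (@arg_maxnP _ j0 (fun j => a j != b j) (fun j : 'I_d => val j) neq_j0)
  => j neq_j max_j.
have eq_above (j' : 'I_d) : j < j' -> a j' = b j'.
  by move=> lt_jj'; apply/eqP/contraT => /max_j /=; rewrite leqNgt lt_jj'.
case: (ltngtP (a j) (b j)) => [lt_ab|lt_ba|eq_abj].
- by left; exists j.
- by right; exists j; split=> // j' /eq_above.
- by move: neq_j; rewrite eq_abj eqxx.
Qed.

End Coefficients.

Lemma olt_colex d (x y : ordlt d 1) : olt x y <-> colex_lt x.2 y.2.
Proof.
case: x y => [x1 a] [y1 b]; rewrite /olt /= !ord1 ltnn.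
by split=> [[//|[_ lt_ab]]|lt_ab]; [exact: lt_ab | right].
Qed.

Lemma code_coef_suffix_ltn d (a : {ffun 'I_d -> nat}) (j : 'I_d) j' :
  j < j' -> code (coef_suffix a j') < code (coef_suffix a j).
Proof.
move=> lt_jj'; rewrite coef_suffix_cons; apply: leq_ltn_trans (ltn_code_cons _ _).
by rewrite /coef_suffix -(subnK lt_jj') -drop_drop leq_code_drop.
Qed.

Section Encode.
Variables (d : nat) (g : nat -> nat).
Hypothesis g_incr : {homo g : m n / m < n}.
Implicit Types (a b : {ffun 'I_d -> nat}).

Let g_mono : {mono g : m n / m < n} := leqW_mono (leq_mono g_incr).
Let g_inj : injective g := incn_inj (leq_mono g_incr).

Definition encode a : {ffun 'I_d -> nat} :=
  [ffun j : 'I_d => g (code (coef_suffix a j))].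

Lemma encode_decreasing a (j j' : 'I_d) : j < j' -> encode a j' < encode a j.
Proof. by move=> lt_jj'; rewrite !ffunE g_mono code_coef_suffix_ltn. Qed.

Lemma encode_eq a b j j' :
  encode a j = encode b j' -> coef_suffix a j = coef_suffix b j'.
Proof. by rewrite !ffunE => /g_inj/code_inj. Qed.

Lemma encode_level a b (j j' : 'I_d) : encode a j = encode b j' -> j = j'.
Proof. by move/encode_eq/coef_suffix_eq_ord. Qed.

Lemma encode_succ a b (j j1 : 'I_d) :
  j = j1.+1 :> nat -> encode a j1 = encode b j1 -> encode a j = encode b j.
Proof.
by move=> j_j1 /encode_eq eq_j1; rewrite !ffunE j_j1 !coef_suffix_behead eq_j1.
Qed.

Lemma encode_colex_mono a b : colex_lt a b -> colex_lt (encode a) (encode b).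
Proof.
case=> j [lt_ab eq_ab]; exists j; split.
  by rewrite !ffunE g_mono !coef_suffix_cons (eq_coef_suffix eq_ab) ltn_code_head.
move=> j' lt_jj'; rewrite !ffunE (@eq_coef_suffix _ a b j') // => j'' le_j'j''.
by apply: eq_ab; exact: leq_trans le_j'j''.
Qed.

Lemma encode_colex a b : colex_lt (encode a) (encode b) <-> colex_lt a b.
Proof.
split=> [lt_ab|]; last exact: encode_colex_mono.
have [eq_ab|/eqP neq_ab] := eqVneq a b.
  by rewrite eq_ab in lt_ab; case: (colex_irr lt_ab).
case: (colex_total neq_ab) => // /encode_colex_mono lt_ba.
by case: (colex_asym lt_ab lt_ba).
Qed.

End Encode.

Lemma sorted_enumeration (T : eqType) (key : T -> nat) n (e : seq T) :
  uniq e -> size e = n -> {in e &, injective key} ->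
  exists p : 'I_n -> T, perm_eq e [seq p i | i <- enum 'I_n] /\
    forall i i' : 'I_n, i < i' -> key (p i) < key (p i').
Proof.
move=> e_uniq e_size key_inj.
pose s := sort (relpre key leq) e.
have s_size : size s == n by rewrite size_sort e_size.
have e_s : perm_eq e s by rewrite perm_sym perm_sort.
exists (tnth (Tuple s_size)); split; first by rewrite map_tnth_enum.
move=> i i' lt_ii'; have x0 : T := tnth (Tuple s_size) i.
rewrite !(tnth_nth x0) /=.
have s_sorted : sorted (relpre key leq) s.
  by apply: sort_sorted => x y; exact: leq_total.
have le_key : key (nth x0 s i) <= key (nth x0 s i').
  apply: (sorted_ltn_nth (leT := relpre key leq)); rewrite ?inE ?(eqP s_size) //.
  by move=> y x z; exact: leq_trans.
have s_mem k : k < n -> nth x0 s k \in e.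
  by rewrite (perm_mem e_s) -(eqP s_size); exact: mem_nth.
rewrite ltn_neqAle le_key andbT; apply: contraTneq lt_ii' => /key_inj eq_nth.
have /eqP : nth x0 s i = nth x0 s i' by apply: eq_nth; exact: s_mem.
by rewrite nth_uniq ?(eqP s_size) ?sort_uniq // => /eqP ->; rewrite ltnn.
Qed.

Definition value_le n d (p : 'I_n -> ordlt d 1) (u v : 'I_n * 'I_d) : bool :=
  (p u.1).2 u.2 <= (p v.1).2 v.2.

Lemma value_le_satisfies_CR n d (e : seq (ordlt d 1)) (p : 'I_n -> ordlt d 1) :
  perm_eq e [seq p i | i <- enum 'I_n] -> satisfies_CR e (fun=> ord0) (value_le p).
Proof. by move=> e_p; exists p; split=> //; split=> [i|//]; rewrite ord1. Qed.

Lemma leq_andNgeq m n : (m <= n) && ~~ (n <= m) = (m < n).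
Proof. by rewrite -ltnNge andb_idl // => /ltnW. Qed.

Section ColoringRule.
Variables (d : nat) (S : {ffun 'I_d -> nat} -> Prop).
Hypothesis S_decreasing : forall a (j j' : 'I_d), S a -> j < j' -> a j' < a j.
Hypothesis S_level : forall a b (j j' : 'I_d), S a -> S b -> a j = b j' -> j = j'.
Hypothesis S_succ : forall a b (j j1 : 'I_d), S a -> S b ->
  val j = (val j1).+1 -> a j1 = b j1 -> a j = b j.

Definition head_coef (a : {ffun 'I_d -> nat}) : nat := nth 0 (codom a) 0.

Lemma head_coefE a (j : 'I_d) : val j = 0 -> head_coef a = a j.
Proof. by case: j => -[|//] lt_0d _; rewrite -codom_nth. Qed.

Lemma head_coef0 a : d = 0 -> head_coef a = 0.
Proof. by move=> d0; rewrite /head_coef nth_default // size_codom card_ord d0. Qed.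

Lemma S_head_coef_inj a b : S a -> S b -> head_coef a = head_coef b -> a = b.
Proof.
move=> Sa Sb eq_head; apply/ffunP => -[j lt_jd].
elim: j lt_jd => [lt_0d|j IHj lt_jd]; first by rewrite -!codom_nth.
by apply: (S_succ (j1 := Ordinal (ltnW lt_jd))) => //=; exact: IHj.
Qed.

Lemma edge_satisfies_CR n (e : seq (ordlt d 1)) :
  uniq e -> size e = n -> (forall x, x \in e -> S x.2) ->
  exists (Y : 'I_n -> 'I_1) (le : 'I_n * 'I_d -> 'I_n * 'I_d -> bool),
    is_CR Y le /\ satisfies_CR e Y le.
Proof.
move=> e_uniq e_size eS.
have key_inj : {in e &, injective (fun x : ordlt d 1 => head_coef x.2)}.
  move=> [x1 a] [y1 b] /eS Sa /eS Sb /(S_head_coef_inj Sa Sb) /= ->.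
  by rewrite !ord1.
have [p [e_p p_incr]] := sorted_enumeration e_uniq e_size key_inj.
have pS i : S (p i).2 by apply: eS; rewrite (perm_mem e_p) map_f ?mem_enum.
exists (fun=> ord0), (value_le p); split; last exact: value_le_satisfies_CR.
rewrite /is_CR /value_le; split; first by move=> u v; exact: leq_total.
split; first by move=> u v w; exact: leq_trans.
split.
  move=> _ j i i' j0 lt_ii'; rewrite /= leq_andNgeq.
  by move: (p_incr i i' lt_ii'); rewrite !(head_coefE _ j0).
split.
  by move=> d0 i i' /p_incr; rewrite !head_coef0.
split; first by [].
split; first by move=> i j j' lt_j'j; rewrite /= leq_andNgeq S_decreasing.
split; first by move=> i i' j j' /=; rewrite -eqn_leq => /eqP /S_level; apply.
move=> i i' j j1 j_j1 /=; rewrite -!eqn_leq; apply: contra => /eqP eq_j1.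
by rewrite (S_succ _ _ j_j1 eq_j1).
Qed.

End ColoringRule.

Lemma infinite_nat_set_incr (G : nat -> Prop) : infinite_nat_set G ->
  exists g : nat -> nat, {homo g : m n / m < n} /\ forall m, G (g m).
Proof.
move=> /choice [next next_spec].
pose g m := iter m (fun x => next x.+1) (next 0).
exists g; split; last by case=> [|m]; exact: (next_spec _).2.
by apply: homo_ltn => [|m]; [exact: ltn_trans | exact: (next_spec _).1].
Qed.

Theorem lemma8p2 (n d : nat) (G : nat -> Prop) :
  infinite_nat_set G ->
  exists H : ordlt d 1 -> Prop,
    order_equiv_full H /\
    forall e : seq (ordlt d 1), is_nsubset n H e ->
      (exists (Y : 'I_n -> 'I_1) (le : 'I_n * 'I_d -> 'I_n * 'I_d -> bool),
          is_CR Y le /\ satisfies_CR e Y le) /\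
      (forall x, x \in e -> forall j : 'I_d, G (x.2 j)).
Proof.
move=> /infinite_nat_set_incr [g [g_incr gG]].
pose S (a : {ffun 'I_d -> nat}) := exists c, a = encode g c.
exists (fun y => S y.2); split.
  exists (fun x => (x.1, encode g x.2)); split; first by move=> x; exists x.2.
  split; first by move=> [y1 b] [c /= ->]; exists (y1, c).
  by move=> x y; rewrite !olt_colex encode_colex.
move=> e [e_uniq e_size eS]; split; last by move=> x /eS [c ->] j; rewrite ffunE.
apply: (edge_satisfies_CR (S := S)) => //.
- by move=> _ j j' [a ->]; exact: encode_decreasing.
- by move=> _ _ j j' [a ->] [b ->]; exact: encode_level.
- by move=> _ _ j j1 [a ->] [b ->]; exact: encode_succ.
Qed.
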